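(* Let $E\subset\mathbb R^+$. Then $$\mathrm{Dim}_\mathrm{H}E=\inf\ \mathrm{Dim}_\mathrm{H}\Big(\bigcup_{n\ge1}\bigcup_{R\in\mathcal R_n}R\Big),$$ where the infimum is taken over all families $(\mathcal R_n)_{n\ge1}$ such that, for each $n$, $\mathcal R_n$ is a family of intervals with integer endpoints, each of length a (positive integer) multiple of $n^2$, which covers $E\cap\mathcal S_n$.
   Context: $|Q|$ denotes the length of an interval $Q$. Let $\mathcal S_n=[2^{n-1},2^n)$ for $n\ge1$. For $E\subset\mathbb R^+$, $\rho\ge0$ and $n\ge1$, let $$\nu^n_\rho(E)=\inf\Big\{\sum_{i=1}^m\Big(\frac{|Q_i|}{2^n}\Big)^\rho: Q_i\subset\mathcal S_n \text{ non-trivial intervals with integer endpoints},\ E\cap\mathcal S_n\subset\bigcup_{i=1}^m Q_i\Big\},$$ the infimum being over finite families. The macroscopic Hausdorff dimension is $\mathrm{Dim}_\mathrm{H}E=\inf\{\rho\ge0:\sum_{n\ge1}\nu^n_\rho(E)<\infty\}$. *)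

From HB Require Import structures.
From mathcomp Require Import all_boot all_order all_algebra.
From mathcomp Require Import all_classical all_reals all_analysis.
Set Implicit Arguments. Unset Strict Implicit. Unset Printing Implicit Defensive.
Import Order.TTheory GRing.Theory Num.Theory.
Local Open Scope classical_set_scope.
Local Open Scope ring_scope.

Section MacroDim.
Variable R : realType.

Definition Sn (n : nat) : set R :=
  [set x : R | (2%:R ^+ n.-1 <= x) && (x < 2%:R ^+ n)].

Definition int_interval (Q : set R) (a b : int) : Prop :=
  (a < b)%R /\
  (Q = [set x : R | (a%:~R <= x) && (x <= b%:~R)] \/
   Q = [set x : R | (a%:~R < x) && (x < b%:~R)] \/
   Q = [set x : R | (a%:~R <= x) && (x < b%:~R)] \/
   Q = [set x : R | (a%:~R < x) && (x <= b%:~R)]).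

Definition nu (n : nat) (rho : R) (E : set R) : R :=
  inf [set s : R | exists (m : nat) (a b : nat -> int) (Q : nat -> set R),
        (forall i, (i < m)%N -> int_interval (Q i) (a i) (b i) /\ Q i `<=` Sn n) /\
        E `&` Sn n `<=` \bigcup_(i in [set i | (i < m)%N]) Q i /\
        s = \sum_(i < m) (((b i - a i)%:~R / 2%:R ^+ n) `^ rho)].

Definition DimH (E : set R) : R :=
  inf [set rho : R | 0 <= rho /\
        (\sum_(1 <= n <oo) (nu n rho E)%:E < +oo)%E].

End MacroDim.

(* Monotonicity of DimH gives one inequality, since the union of a family
   contains every E ∩ S_n.  Conversely, fix rho > DimH E and delta > 0 and take,
   at each level n, a cover of E ∩ S_n whose rho-cost is within 2^-n of
   nu^n_rho(E).  Rounding each of its intervals [a, b] up to [a, a + k n^2),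
   with k n^2 the least multiple of n^2 exceeding b - a, adds at most n^2 to its
   length.  For m >= 6 the rounded intervals meeting S_m come from level m, or
   from level m - 1, and the latter stay inside [2^(m-1), 2^(m-1) + (m-1)^2).
   A level-m interval of length L >= m^2 at most doubles, while one with
   L < m^2 has (rho + delta)-cost at most (2 m^2 / 2^m)^(rho + delta), which is
   <= C w^m 2^(-m rho) with w < 1.  Hence nu^m_(rho+delta) of the rounded union
   is at most a constant times nu^m_rho(E) plus geometric terms, so the rounded
   union has dimension at most rho + delta. *)

From HB Require Import structures.
From mathcomp Require Import all_boot all_order all_algebra.
From mathcomp Require Import all_classical all_reals all_analysis.
From mathcomp Require Import ring lra zify.
Set Implicit Arguments. Unset Strict Implicit. Unset Printing Implicit Defensive.
Import Order.TTheory GRing.Theory Num.Theory.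
Local Open Scope classical_set_scope.
Local Open Scope ring_scope.

Lemma sq_leq_exp2 n : (4 <= n)%N -> (n ^ 2 <= 2 ^ n)%N.
Proof.
elim: n => // n IH; rewrite leq_eqVlt => /orP[/eqP <- //|n4].
have := IH n4; rewrite -!mulnn expnS; nia.
Qed.

Lemma exp2_add_sq_leq n m : (6 <= m)%N -> (n + 2 <= m)%N ->
  (2 ^ n + n ^ 2 <= 2 ^ m.-1)%N.
Proof.
move=> m6 nm; have [n4|n3] := leqP 4 n.
  have : (2 ^ n.+1 <= 2 ^ m.-1)%N by rewrite leq_pexp2l //; lia.
  by have := sq_leq_exp2 n4; rewrite [(2 ^ n.+1)%N]expnS; lia.
have : (2 ^ 5 <= 2 ^ m.-1)%N by rewrite leq_pexp2l //; lia.
have : (2 ^ n <= 2 ^ 3)%N by rewrite leq_pexp2l //; lia.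
have : (n ^ 2 <= 3 ^ 2)%N by rewrite leq_exp2r //; lia.
lia.
Qed.

Lemma exp2_add_sq_pred m : (6 <= m)%N -> (2 ^ m.-1 + m.-1 ^ 2 <= 2 ^ m)%N.
Proof.
case: m => // m m6 /=; have := @sq_leq_exp2 m; rewrite [(2 ^ m.+1)%N]expnS; lia.
Qed.

Lemma ceil_mul_bounds L d : (0 < d)%N -> (L < (L %/ d).+1 * d <= L + d)%N.
Proof.
by move=> d0; rewrite ltn_ceil //= mulSn addnC leq_add2r leq_trunc_div.
Qed.

Section PowerBounds.
Variable R : realType.
Implicit Types x q r t w : R.

Lemma powR_exprn x t k : 0 <= x -> (x ^+ k) `^ t = (x `^ t) ^+ k.
Proof.
by move=> x0; rewrite -powR_mulrn // powRAC powR_mulrn //; apply: powR_ge0.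
Qed.

Lemma powRV x t : 0 < x -> (x^-1) `^ t = (x `^ t)^-1.
Proof.
move=> x0; apply: (@mulfI _ (x `^ t)); first by rewrite gt_eqF ?powR_gt0.
by rewrite -powRM ?invr_ge0 ?ltW // divff ?gt_eqF // powR1 divff // gt_eqF ?powR_gt0.
Qed.

Lemma powR_gt1 x t : 1 < x -> 0 < t -> 1 < x `^ t.
Proof.
move=> x1 t0; rewrite /powR gt_eqF ?(lt_trans ltr01) // expR_gt1.
by rewrite mulr_gt0 // ln_gt0.
Qed.

Lemma powR_le1 x r : 0 <= x <= 1 -> 0 <= r -> x `^ r <= 1.
Proof.
move=> /andP[x0 x1] r0; have [->|xn0] := eqVneq x 0.
  by rewrite /powR eqxx; case: (r == 0).
rewrite -(powRr0 x); apply: ger_powR => //.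
by rewrite x1 andbT lt_neqAle eq_sym xn0.
Qed.

Lemma bernoulli_ineq q m : 1 <= q -> m%:R * (q - 1) <= q ^+ m - 1.
Proof.
move=> q1; rewrite subrX1 mulrC ler_wpM2l ?subr_ge0 //.
rewrite -[m in m%:R]card_ord -sumr_const; apply: ler_sum => i _.
exact: exprn_ege1.
Qed.

Lemma sqr_le_geometric q m : 1 < q -> m%:R ^+ 2 <= ((q - 1) ^+ 2)^-1 * (q ^+ 2) ^+ m.
Proof.
move=> q1; have q10 : 0 < (q - 1) ^+ 2 by rewrite exprn_gt0 // subr_gt0.
rewrite mulrC ler_pdivlMr // -exprMn -exprM mulnC exprM.
have : 0 <= m%:R * (q - 1) by rewrite mulr_ge0 // subr_ge0 ltW.
by have := bernoulli_ineq m (ltW q1); nra.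
Qed.

Lemma powR_sqr_geometric_bounded r w : 0 < r -> 0 < w < 1 ->
  exists C, 0 <= C /\ forall m, (m%:R ^+ 2) `^ r * w ^+ m <= C.
Proof.
move=> r0 /andP[w0 w1]; have w1' : 1 < w^-1 by rewrite invf_gt1.
pose q : R := w^-1 `^ (2 * r)^-1.
have q1 : 1 < q by apply: powR_gt1; rewrite // invr_gt0 mulr_gt0.
have q2r : (q ^+ 2) `^ r = w^-1.
  rewrite -powR_mulrn ?(le_trans ler01 (ltW q1)) // -!powRrM mulVf.
    by rewrite powRr1 // invr_ge0 ltW.
  by rewrite gt_eqF ?mulr_gt0.
pose K : R := ((q - 1) ^+ 2)^-1.
have K0 : 0 <= K by rewrite invr_ge0 sqr_ge0.
have q0 : 0 <= q ^+ 2 by rewrite sqr_ge0.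
exists (K `^ r); split=> [|m]; first exact: powR_ge0.
have : (m%:R ^+ 2) `^ r <= (K * (q ^+ 2) ^+ m) `^ r.
  apply: (ge0_ler_powR (ltW r0) _ _ (sqr_le_geometric m q1)).
    by rewrite nnegrE sqr_ge0.
  by rewrite nnegrE; apply: mulr_ge0 => //; apply: exprn_ge0.
rewrite (powRM _ K0 (exprn_ge0 m q0)) (powR_exprn _ _ q0) q2r => h.
apply: le_trans (ler_wpM2r (exprn_ge0 _ (ltW w0)) h) _.
by rewrite -mulrA -exprMn mulVf ?gt_eqF // expr1n mulr1.
Qed.

Lemma sqr_div_exp2_powR_le rho delta : 0 <= rho -> 0 < delta ->
  exists C w, 0 <= C /\ 0 <= w < 1 /\ forall m : nat,
    (2 * m%:R ^+ 2 / 2%:R ^+ m) `^ (rho + delta) <= C * w ^+ m * ((2%:R ^+ m)^-1) `^ rho.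
Proof.
move=> r0 d0; have rd0 : 0 < rho + delta by lra.
have u1 : 1 < 2 `^ (delta / 2) by apply: powR_gt1; rewrite ?ltr1n ?divr_gt0.
pose w : R := (2 `^ (delta / 2))^-1.
have w0 : 0 < w by rewrite invr_gt0 (lt_trans ltr01).
have w01 : 0 < w < 1 by rewrite w0 invf_lt1 // (lt_trans ltr01).
have [C [C0 hC]] := powR_sqr_geometric_bounded rd0 w01.
exists (2 `^ (rho + delta) * C), w; split; first by rewrite mulr_ge0 ?powR_ge0.
split; first by case/andP: w01 => /ltW -> ->.
move=> m; have e0 : (0 : R) < 2%:R ^+ m by rewrite exprn_gt0.
have hw : ((2%:R ^+ m)^-1) `^ delta = w ^+ m * w ^+ m.
  rewrite powRV // powR_exprn ?ler0n // -exprMn -expr2 /w !exprVn.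
  by rewrite -[2 `^ (delta / 2) ^+ 2]powR_mulrn ?powR_ge0 // -powRrM divfK ?pnatr_eq0.
have x0 : 0 <= m%:R ^+ 2 :> R by apply: sqr_ge0.
have i0 : 0 <= (2%:R ^+ m)^-1 :> R by rewrite invr_ge0 ltW.
set x := m%:R ^+ 2 in x0 hC *; set i := (2%:R ^+ m)^-1 in i0 hw *.
rewrite -mulrA (powRM _ (ler0n _ 2) (mulr_ge0 x0 i0)) (powRM _ x0 i0).
rewrite [i `^ _]powRD ?invr_eq0 ?gt_eqF ?implybT // hw -!mulrA ler_wpM2l ?powR_ge0 //.
have -> : x `^ (rho + delta) * (i `^ rho * (w ^+ m * w ^+ m)) =
          (x `^ (rho + delta) * w ^+ m) * (w ^+ m * i `^ rho) by ring.
by apply: ler_wpM2r; [rewrite mulr_ge0 ?powR_ge0 // exprn_ge0 // ltW | exact: hC].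
Qed.

End PowerBounds.

Section Intervals.
Variable R : realType.

Definition Ico (a b : int) : set R := [set x | a%:~R <= x < b%:~R].

Lemma int_interval_Ico a b : (a < b)%R -> int_interval (Ico a b) a b.
Proof. by move=> ab; split; last by right; right; left. Qed.

Lemma subset_Ico a b c d : (c <= a)%R -> (b <= d)%R -> Ico a b `<=` Ico c d.
Proof.
move=> ca bd x /andP[ax xb]; apply/andP; split.
  by apply: le_trans ax; rewrite ler_int.
by apply: lt_le_trans xb _; rewrite ler_int.
Qed.

Lemma exp2_intr n : ((2 ^ n)%N%:Z)%:~R = 2%:R ^+ n :> R.
Proof. by rewrite pmulrn -natrX. Qed.

Lemma Sn_Ico n : Sn n = Ico (2 ^ n.-1)%N (2 ^ n)%N.
Proof. by rewrite /Sn /Ico !exp2_intr. Qed.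

Lemma int_interval_bounds (Q : set R) a b x : int_interval Q a b -> Q x ->
  a%:~R <= x <= b%:~R.
Proof. by case=> _ [->|[->|[->|->]]] /= /andP[h1 h2]; rewrite ?h1 ?h2 ?ltW. Qed.

Lemma int_interval_subset_Ico (Q : set R) a b c d :
  int_interval Q a b -> Q `<=` Ico c d -> (c <= a)%R /\ (b <= d)%R.
Proof.
case=> ab hQ sQ.
have ab1 : (a + 1)%:~R <= b%:~R :> R by rewrite ler_int; lia.
rewrite intrD in ab1.
(* [a + 1/2] and [b - 1/2] lie in [Q] whatever its type of endpoints *)
have /sQ /andP[ca _] : Q (a%:~R + 2^-1).
  by case: hQ => [->|[->|[->|->]]] /=; apply/andP; split; lra.
have /sQ /andP[_ bd] : Q (b%:~R - 2^-1).
  by case: hQ => [->|[->|[->|->]]] /=; apply/andP; split; lra.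
have ca1 : (c < a + 1)%R by rewrite -(ltr_int R) intrD; lra.
have bd1 : (b < d + 1)%R by rewrite -(ltr_int R) intrD; lra.
split; lia.
Qed.

Lemma window_Sn m n : (6 <= m)%N -> n != m ->
  Ico (2 ^ n.-1)%N (2 ^ n + n ^ 2)%N `&` Sn m `<=`
  (Ico (2 ^ m.-1)%N (2 ^ m.-1 + m.-1 ^ 2)%N : set R).
Proof.
move=> m6 nm x []; rewrite Sn_Ico /Ico /= => /andP[x1 x2] /andP[x3 x4].
have lt_int (p q : int) : p%:~R <= x -> x < q%:~R -> (p < q)%R.
  by move=> px xq; rewrite -(ltr_int R); apply: le_lt_trans xq.
case: (ltngtP n m) nm => // [nm|mn] _.
- have [nm1|nm1] := eqVneq n m.-1; first by rewrite x3 -nm1.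
  have n2 : (n + 2 <= m)%N by move/eqP: nm1; lia.
  by have := exp2_add_sq_leq m6 n2; have := lt_int _ _ x3 x2; lia.
- have : (2 ^ m <= 2 ^ n.-1)%N by rewrite leq_pexp2l //; lia.
  by have := lt_int _ _ x1 x4; lia.
Qed.

End Intervals.

Section Covers.
Variable R : realType.
Implicit Types (E A B : set R) (rho : R) (n m : nat) (a b : nat -> int).

Definition cover n E m a b (Q : nat -> set R) :=
  (forall i, (i < m)%N -> int_interval (Q i) (a i) (b i) /\ Q i `<=` Sn n) /\
  E `&` Sn n `<=` \bigcup_(i in [set i | (i < m)%N]) Q i.

Definition cover_cost n rho m a b :=
  \sum_(i < m) (((b i - a i)%:~R / 2%:R ^+ n) `^ rho).

Definition cover_costs n rho E :=
  [set s | exists m a b Q, cover n E m a b Q /\ s = cover_cost n rho m a b].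

Lemma nuE n rho E : nu n rho E = inf (cover_costs n rho E).
Proof.
congr inf; apply/seteqP; split=> s.
  by case=> m [a [b [Q [h1 [h2 ->]]]]]; exists m, a, b, Q.
by case=> m [a [b [Q [[h1 h2] ->]]]]; exists m, a, b, Q.
Qed.

Lemma cover_cost_ge0 n rho m a b : 0 <= cover_cost n rho m a b.
Proof. by apply: sumr_ge0 => i _; apply: powR_ge0. Qed.

Lemma cover_costs_lbound n rho E : lbound (cover_costs n rho E) 0.
Proof. by move=> s [m [a [b [Q [_ ->]]]]]; apply: cover_cost_ge0. Qed.

Lemma cover_Sn n E : (1 <= n)%N ->
  cover n E 1 (fun=> (2 ^ n.-1)%N%:Z) (fun=> (2 ^ n)%N%:Z) (fun=> Sn n).
Proof.
move=> n1; split=> [i _|x [_ Sx]]; last by exists 0%N.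
split=> //; rewrite Sn_Ico; apply: int_interval_Ico.
by rewrite ltz_nat ltn_exp2l // prednK.
Qed.

Lemma cover_costs_neq0 n rho E : (1 <= n)%N -> cover_costs n rho E !=set0.
Proof. by move=> n1; eexists; do 4 eexists; split; first exact: cover_Sn. Qed.

Lemma nu_ge0 n rho E : 0 <= nu n rho E.
Proof.
rewrite nuE; have [->|/set0P ne] := eqVneq (cover_costs n rho E) set0.
  by rewrite inf0.
exact: lb_le_inf ne (@cover_costs_lbound _ _ _).
Qed.

Lemma nu_le_cover n rho E m a b Q : cover n E m a b Q ->
  nu n rho E <= cover_cost n rho m a b.
Proof.
move=> EQ; rewrite nuE; apply: ge_inf; last by exists m, a, b, Q.
by exists 0; apply: cover_costs_lbound.
Qed.

Lemma nu_le_Ico n rho E m a b :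
  (forall i, (i < m)%N -> (a i < b i)%R /\ (Ico (a i) (b i) : set R) `<=` Sn n) ->
  E `&` Sn n `<=` \bigcup_(i in [set i | (i < m)%N]) Ico (a i) (b i) ->
  nu n rho E <= cover_cost n rho m a b.
Proof.
move=> hab hE; apply: nu_le_cover; split; last exact: hE.
by move=> i im; have [ab sub] := hab i im; split=> //; apply: int_interval_Ico.
Qed.

Lemma nu_approx n rho E eps : (1 <= n)%N -> 0 < eps ->
  exists m a b Q, cover n E m a b Q /\ cover_cost n rho m a b < nu n rho E + eps.
Proof.
move=> n1 e0; have : inf (cover_costs n rho E) < nu n rho E + eps by rewrite nuE ltrDl.
case/(inf_lt (cover_costs_neq0 rho E n1)) => _ [m [a [b [Q [EQ ->]]]]] lt.
by exists m, a, b, Q.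
Qed.

Lemma nu_le_subset n rho A B : (1 <= n)%N -> A `&` Sn n `<=` B ->
  nu n rho A <= nu n rho B.
Proof.
move=> n1 AB; rewrite [nu n rho B]nuE.
apply: lb_le_inf (cover_costs_neq0 _ _ n1) _ => _ [m [a [b [Q [[Qab BQ] ->]]]]].
apply: (@nu_le_cover _ _ _ _ _ _ Q); split=> // x Ax.
by apply: BQ; split; [apply: AB | case: Ax].
Qed.

Lemma nu_le_setU_Ico n rho A B c d : (1 <= n)%N -> (c < d)%R ->
  (Ico c d : set R) `<=` Sn n -> A `&` Sn n `<=` B `|` Ico c d ->
  nu n rho A <= nu n rho B + ((d - c)%:~R / 2%:R ^+ n) `^ rho.
Proof.
move=> n1 cd cdS AB; rewrite -lerBlDr [nu n rho B]nuE.
apply: lb_le_inf (cover_costs_neq0 _ _ n1) _ => _ [m [a [b [Q [[Qab BQ] ->]]]]].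
pose ext T (f : nat -> T) x i := if (i < m)%N then f i else x.
rewrite lerBlDr.
have -> : cover_cost n rho m a b + ((d - c)%:~R / 2%:R ^+ n) `^ rho =
          cover_cost n rho m.+1 (ext _ a c) (ext _ b d).
  rewrite /cover_cost big_ord_recr /= /ext ltnn; congr (_ + _).
  by apply: eq_bigr => i _; rewrite ltn_ord.
apply: (@nu_le_cover _ _ _ _ _ _ (ext _ Q (Ico c d))); split.
  move=> i; rewrite ltnS leq_eqVlt /ext => /orP[/eqP ->|im]; last by rewrite im; exact: Qab.
  by rewrite ltnn; split=> //; apply: int_interval_Ico.
move=> x Ax; case: (AB x Ax) => [Bx|cdx].
  have [i im Qx] := BQ x (conj Bx Ax.2).
  by exists i; [apply: ltnW | rewrite /ext im].
by exists m => //=; rewrite /ext ltnn.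
Qed.

Lemma nu_le1 n rho E : (1 <= n)%N -> 0 <= rho -> nu n rho E <= 1.
Proof.
move=> n1 r0; apply: le_trans (nu_le_cover rho (cover_Sn E n1)) _.
rewrite /cover_cost big_ord1 powR_le1 // intrB !exp2_intr.
have h0 : (0 : R) < 2%:R ^+ n by rewrite exprn_gt0.
have h1 : (0 : R) <= 2%:R ^+ n.-1 by rewrite exprn_ge0.
have h2 : (2%:R ^+ n.-1 : R) <= 2%:R ^+ n by rewrite ler_eXn2l ?ltr1n ?leq_pred.
apply/andP; split; first by rewrite divr_ge0 ?subr_ge0 // ltW.
by rewrite ler_pdivrMr // mul1r; lra.
Qed.

End Covers.

Section Series.
Variable R : realType.
Implicit Types u v : nat -> R.

Definition finite_series u := (\sum_(1 <= n <oo) (u n)%:E < +oo)%E.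

Lemma finite_series_bounded u B : (forall n, 0 <= u n) ->
  (forall N, \sum_(1 <= i < N) u i <= B) -> finite_series u.
Proof.
move=> u0 uB; apply: (@le_lt_trans _ _ B%:E); last exact: ltry.
apply: lime_le; first by apply: is_cvg_nneseries => n _ _; rewrite lee_fin.
by apply: nearW => N; rewrite sumEFin lee_fin.
Qed.

Lemma finite_series_le u v : (forall n, 0 <= u n) ->
  (forall n, (1 <= n)%N -> u n <= v n) -> finite_series v -> finite_series u.
Proof.
move=> u0 uv; apply: le_lt_trans.
apply: lime_le; first by apply: is_cvg_nneseries => n _ _; rewrite lee_fin.
apply: nearW => N; apply: le_trans (nneseries_lim_ge _ _); last first.
  by move=> n n1 _; rewrite lee_fin (le_trans (u0 n)) ?uv.
by rewrite !sumEFin lee_fin; apply: ler_sum_nat => i /andP[i1 _]; apply: uv.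
Qed.

Lemma finite_seriesD u v : (forall n, 0 <= u n) -> (forall n, 0 <= v n) ->
  finite_series u -> finite_series v -> finite_series (fun n => u n + v n).
Proof.
move=> u0 v0 fu fv; rewrite /finite_series.
under eq_eseriesr do rewrite EFinD.
by rewrite nneseriesD => [|n _ _|n _ _]; [apply: lte_add_pinfty | rewrite lee_fin ..].
Qed.

Lemma finite_seriesZ c u : 0 <= c -> (forall n, 0 <= u n) ->
  finite_series u -> finite_series (fun n => c * u n).
Proof.
move=> c0 u0 fu; rewrite /finite_series.
under eq_eseriesr do rewrite EFinM.
by rewrite nneseriesZl => [|n _]; [apply: lte_mul_pinfty | rewrite lee_fin].
Qed.

Lemma finite_series_geometric c q : 0 <= c -> 0 <= q < 1 ->
  finite_series (fun n => c * q ^+ n).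
Proof.
move=> c0 /andP[q0 q1]; have q1' : 0 < 1 - q by rewrite subr_gt0.
apply: (@finite_series_bounded _ (c / (1 - q))) => [n|[|N]].
- by rewrite mulr_ge0 ?exprn_ge0.
- by rewrite big_geq // divr_ge0 // ltW.
rewrite -add1n -mulr_sumr geometric_partial_tail geometric_seriesE ?lt_eqF //= expr1.
rewrite ler_wpM2l // ler_pdivrMr // mulVf ?gt_eqF //.
have : 0 <= q ^+ N by rewrite exprn_ge0.
nra.
Qed.

End Series.

Section Dimension.
Variable R : realType.
Implicit Types (X Y : set R) (rho : R).

Definition DimH_exponents X := [set rho | 0 <= rho /\ finite_series (fun n => nu n rho X)].

Lemma DimH_le X rho : 0 <= rho -> finite_series (fun n => nu n rho X) -> DimH X <= rho.
Proof. by move=> r0 fX; apply: ge_inf; [exists 0 => r [] | split]. Qed.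

Lemma nu2_le_unit_cover X n : (1 <= n)%N -> nu n 2 X <= 2^-1 ^+ n.
Proof.
move=> n1; pose h := (2 ^ n.-1)%N.
have hn : (2 ^ n)%N = (2 * h)%N by rewrite /h -expnS prednK.
apply: le_trans (@nu_le_Ico _ n 2 X h (fun i => (h + i)%N%:Z)
  (fun i => (h + i).+1%N%:Z) _ _) _.
- move=> i ih; split; first by rewrite ltz_nat.
  by rewrite Sn_Ico; apply: subset_Ico; rewrite lez_nat -?hn; lia.
- move=> x [_]; rewrite Sn_Ico /= -/h => /andP[x1 x2].
  have hx : (h%:Z <= Num.floor x)%R by rewrite floor_ge_int.
  have xh : (Num.floor x < (2 * h)%N%:Z)%R by rewrite floor_lt_int -hn.
  exists `|Num.floor x - h%:Z|%N; first by rewrite /=; lia.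
  rewrite /Ico /= (_ : (h + _)%N%:Z = Num.floor x); last by lia.
  by rewrite (_ : (_.+1)%N%:Z = Num.floor x + 1) ?floor_le ?floorD1_gt //; lia.
have y0 : (0 : R) < 2%:R ^+ n by rewrite exprn_gt0.
rewrite /cover_cost (eq_bigr (fun=> ((2%:R ^+ n)^-1) ^+ 2)) => [|i _]; last first.
  by rewrite (_ : (_ - _)%R = 1) ?mul1r ?powR_mulrn ?invr_ge0 ?ltW //; lia.
have hy : (h%:R : R) <= 2%:R ^+ n by rewrite -natrX ler_nat leq_pexp2l // leq_pred.
rewrite sumr_const card_ord -[_ *+ h]mulr_natr exprVn.
apply: le_trans (ler_wpM2l _ hy) _; first by rewrite invr_ge0 exprn_ge0 // ltW.
by rewrite exprVn expr2 invfM -mulrA mulVf ?gt_eqF ?mulr1.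
Qed.

Lemma DimH_exponents_neq0 X : DimH_exponents X !=set0.
Proof.
exists 2; split=> //; apply: (@finite_series_le _ _ (fun n => 1 * 2^-1 ^+ n)).
- by move=> n; apply: nu_ge0.
- by move=> n n1; rewrite mul1r; apply: nu2_le_unit_cover.
- by apply: (finite_series_geometric (c := 1)); rewrite // invr_ge0 ler0n invf_lt1 ?ltr1n.
Qed.

Lemma le_DimH X Y : (forall n, (1 <= n)%N -> X `&` Sn n `<=` Y) -> DimH X <= DimH Y.
Proof.
move=> XY; apply: lb_le_inf (DimH_exponents_neq0 Y) _ => rho [r0 fY].
apply: DimH_le r0 (finite_series_le _ _ fY) => n; first exact: nu_ge0.
by move=> n1; apply: nu_le_subset n1 (XY n n1).
Qed.

End Dimension.

Section PieceCost.
Variables (R : realType) (rho delta C w : R).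
Hypotheses (rho0 : 0 <= rho) (delta0 : 0 < delta) (C0 : 0 <= C) (w01 : 0 <= w <= 1).
Hypothesis sqr_div_exp2_le : forall m : nat,
  (2 * m%:R ^+ 2 / 2%:R ^+ m) `^ (rho + delta) <= C * w ^+ m * ((2%:R ^+ m)^-1) `^ rho.

Lemma powR_le_sqr_div_exp2 m x : 0 <= x <= 2 * m%:R ^+ 2 / 2%:R ^+ m ->
  x `^ (rho + delta) <= C * w ^+ m * ((2%:R ^+ m)^-1) `^ rho.
Proof.
move=> /andP[x0 xm]; apply: le_trans (sqr_div_exp2_le m).
by apply: ge0_ler_powR; rewrite ?nnegrE //; apply: addr_ge0 rho0 (ltW delta0).
Qed.

Lemma powR_le_double x y : 0 < x <= 1 -> x <= 2 * y ->
  x `^ (rho + delta) <= 2 `^ rho * y `^ rho.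
Proof.
move=> /andP[x0 x1] xy; have y0 : 0 <= y by lra.
apply: le_trans (_ : x `^ rho <= _); first by apply: ger_powR; rewrite ?x0 // lerDl ltW.
by rewrite -powRM //; apply: ge0_ler_powR; rewrite // nnegrE ?mulr_ge0 // ltW.
Qed.

Lemma piece_cost_le m (l L : int) : (1 <= L)%R -> (1 <= l)%R ->
  (l <= L + (m ^ 2)%N%:Z)%R -> (l <= (2 ^ m)%N%:Z)%R ->
  (l%:~R / 2%:R ^+ m) `^ (rho + delta) <= (2 `^ rho + C) * (L%:~R / 2%:R ^+ m) `^ rho.
Proof.
move=> L1 l1 lL l2m; have e0 : (0 : R) < 2%:R ^+ m by rewrite exprn_gt0.
have L0 : (0 : R) <= L%:~R / 2%:R ^+ m by rewrite divr_ge0 ?ler0z ?ltW //; lia.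
rewrite mulrDl; have [Lm|Lm] := leP ((m ^ 2)%N%:Z) L.
- apply: ler_wpDr; first by rewrite mulr_ge0 ?powR_ge0.
  apply: powR_le_double.
    apply/andP; split; first by rewrite divr_gt0 // ltr0z; lia.
    by rewrite ler_pdivrMr // mul1r -exp2_intr ler_int.
  by rewrite mulrA ler_pM2r ?invr_gt0 // -[2]/(2%:~R) -intrM ler_int; lia.
- apply: ler_wpDl; first by rewrite mulr_ge0 ?powR_ge0.
  apply: le_trans (@powR_le_sqr_div_exp2 m _ _) _.
    apply/andP; split; first by rewrite divr_ge0 ?ler0z ?(ltW e0) //; lia.
    by rewrite ler_pM2r ?invr_gt0 // -natrX -natrM pmulrn ler_int; lia.
  rewrite -mulrA ler_wpM2l //; case/andP: w01 => w0 w1.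
  apply: le_trans (_ : _ <= (2%:R ^+ m)^-1 `^ rho) _.
    by rewrite -[X in _ <= X]mul1r ler_wpM2r ?powR_ge0 ?exprn_ile1.
  apply: ge0_ler_powR => //; first by rewrite nnegrE invr_ge0 ltW.
  by rewrite -[X in X <= _]mul1r ler_pM2r ?invr_gt0 // ler1z.
Qed.

End PieceCost.

Section RoundedCover.
Variables (R : realType) (E : set R).
Variables (M : nat -> nat) (a b : nat -> nat -> int) (Q : nat -> nat -> set R).
Hypothesis covers : forall n, (1 <= n)%N -> cover n E (M n) (a n) (b n) (Q n).

Definition round_mult n i := (`|b n i - a n i|%N %/ n ^ 2).+1.

Definition rounded n i : set R := Ico (a n i) (a n i + (round_mult n i * n ^ 2)%N).

Definition rounded_family n : set (set R) := [set rounded n i | i in [set i | (i < M n)%N]].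

Definition rounded_union :=
  \bigcup_(n in [set n | (1 <= n)%N]) \bigcup_(J in rounded_family n) J.

Lemma cover_piece_bounds n i : (1 <= n)%N -> (i < M n)%N ->
  [/\ ((2 ^ n.-1)%N%:Z <= a n i)%R, (a n i < b n i)%R & (b n i <= (2 ^ n)%N%:Z)%R].
Proof.
move=> n1 im; have [Qab QS] := (covers n1).1 i im.
rewrite Sn_Ico in QS; have [an bn] := int_interval_subset_Ico Qab QS.
by split=> //; case: Qab.
Qed.

Lemma round_mult_bounds n i : (1 <= n)%N -> (i < M n)%N ->
  (b n i < a n i + (round_mult n i * n ^ 2)%N%:Z <= b n i + (n ^ 2)%N%:Z)%R.
Proof.
move=> n1 im; have [_ ab _] := cover_piece_bounds n1 im.
have n2 : (0 < n ^ 2)%N by rewrite expn_gt0 n1.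
have /andP[] := ceil_mul_bounds `|b n i - a n i|%N n2.
rewrite -/(round_mult n i); set K := (round_mult n i * n ^ 2)%N.
by move=> h1 h2; apply/andP; split; lia.
Qed.

Lemma rounded_family_cover n : (1 <= n)%N ->
  (forall J, rounded_family n J -> exists (c d : int) (k : nat),
     (1 <= k)%N /\ int_interval J c d /\ d - c = (k * n ^ 2)%:Z) /\
  E `&` Sn n `<=` \bigcup_(J in rounded_family n) J.
Proof.
move=> n1; split.
  move=> _ [i im <-]; exists (a n i), (a n i + (round_mult n i * n ^ 2)%N), (round_mult n i).
  have [_ ab _] := cover_piece_bounds n1 im; have := round_mult_bounds n1 im.
  by move=> /andP[bA _]; split=> //; split; [apply: int_interval_Ico; lia | lia].
move=> x Ex; have [i im Qx] := (covers n1).2 x Ex.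
exists (rounded n i); first by exists i.
have /andP[bA _] := round_mult_bounds n1 im.
have /andP[ax xb] := int_interval_bounds ((covers n1).1 i im).1 Qx.
by apply/andP; split=> //; apply: le_lt_trans xb _; rewrite ltr_int.
Qed.

Lemma rounded_subset_window n i : (1 <= n)%N -> (i < M n)%N ->
  rounded n i `<=` Ico (2 ^ n.-1)%N (2 ^ n + n ^ 2)%N.
Proof.
move=> n1 im; have [an _ bn] := cover_piece_bounds n1 im.
by have /andP[_ Ab] := round_mult_bounds n1 im; apply: subset_Ico => //; lia.
Qed.

Lemma rounded_union_Sn m : (6 <= m)%N ->
  rounded_union `&` Sn m `<=` \bigcup_(i in [set i | (i < M m)%N]) rounded m i `|`
                              Ico (2 ^ m.-1)%N (2 ^ m.-1 + m.-1 ^ 2)%N.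
Proof.
move=> m6 x [[n n1 [_ [i im <-] Jx]] Sx].
have [nm|nm] := eqVneq n m; first by left; rewrite -nm; exists i.
by right; apply: (window_Sn m6 nm); split=> //; apply: rounded_subset_window Jx.
Qed.

Variables (rho delta C w : R).
Hypotheses (rho0 : 0 <= rho) (delta0 : 0 < delta) (C0 : 0 <= C) (w01 : 0 <= w < 1).
Hypothesis sqr_div_exp2_le : forall m : nat,
  (2 * m%:R ^+ 2 / 2%:R ^+ m) `^ (rho + delta) <= C * w ^+ m * ((2%:R ^+ m)^-1) `^ rho.

Lemma nu_rounded_union_le m : (6 <= m)%N ->
  nu m (rho + delta) rounded_union <=
  (2 `^ rho + C) * cover_cost m rho (M m) (a m) (b m) + C * w ^+ m.
Proof.
move=> m6; have m1 : (1 <= m)%N by lia.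
have e0 : (0 : R) < 2%:R ^+ m by rewrite exprn_gt0.
have [w0 /ltW w1] := andP w01.
have spill0 : ((2 ^ m.-1)%N%:Z < (2 ^ m.-1 + m.-1 ^ 2)%N)%R.
  by rewrite ltz_nat -[X in (X < _)%N]addn0 ltn_add2l expn_gt0; lia.
have spillS : (Ico (2 ^ m.-1)%N (2 ^ m.-1 + m.-1 ^ 2)%N : set R) `<=` Sn m.
  by rewrite Sn_Ico; apply: subset_Ico; have := exp2_add_sq_pred m6; lia.
apply: le_trans (nu_le_setU_Ico _ m1 spill0 spillS (rounded_union_Sn m6)) _.
pose A i := a m i + (round_mult m i * m ^ 2)%N%:Z.
pose c i := Order.min (A i) (2 ^ m)%N%:Z.
have c_bounds i : (i < M m)%N ->
    [/\ (a m i < c i)%R, (c i <= A i)%R & (c i <= (2 ^ m)%N%:Z)%R].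
  move=> im; have [_ ab b2] := cover_piece_bounds m1 im.
  have /andP[bA _] := round_mult_bounds m1 im.
  split; rewrite /c ?ge_min ?lexx ?orbT //; rewrite lt_min /A; apply/andP; split; lia.
apply: lerD.
- apply: le_trans (@nu_le_Ico _ m (rho + delta) _ (M m) (a m) c _ _) _.
  + move=> i im; have [ac _ c2] := c_bounds i im; split=> //.
    by have [an _ _] := cover_piece_bounds m1 im; rewrite Sn_Ico; apply: subset_Ico.
  + move=> x [[i im Jx] Sx]; exists i => //; move: Jx Sx; rewrite Sn_Ico.
    move=> /andP[ax xA] /andP[_ x2]; apply/andP; split=> //.
    by rewrite /c; case: (leP (A i) (2 ^ m)%N%:Z).
  + rewrite /cover_cost mulr_sumr; apply: ler_sum => -[i im] _ /=.
    have [an ab b2] := cover_piece_bounds m1 im; have [ac cA c2] := c_bounds i im.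
    have /andP[_ Ab] := round_mult_bounds m1 im.
    by rewrite /A in cA; apply: piece_cost_le; rewrite ?w0 ?w1 //; lia.
- rewrite (_ : (_ - _)%R = (m.-1 ^ 2)%N%:Z); last by lia.
  apply: le_trans (@powR_le_sqr_div_exp2 _ _ _ _ _ rho0 delta0 sqr_div_exp2_le m _ _) _.
    rewrite divr_ge0 ?ler0z ?(ltW e0) //= ler_pM2r ?invr_gt0 //.
    rewrite -natrX -natrM pmulrn ler_nat (leq_trans _ (leq_pmull _ _)) //.
    by rewrite leq_exp2r // leq_pred.
  rewrite -[X in _ <= X]mulr1 ler_wpM2l ?mulr_ge0 ?exprn_ge0 //.
  by rewrite powR_le1 // invr_ge0 (ltW e0) invf_le1 // exprn_ege1 // ler1n.
Qed.

Hypothesis near_optimal : forall n, (1 <= n)%N ->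
  cover_cost n rho (M n) (a n) (b n) <= nu n rho E + 2^-1 ^+ n.
Hypothesis finite_nu : finite_series (fun n => nu n rho E).

Lemma DimH_rounded_union_le : DimH rounded_union <= rho + delta.
Proof.
have [w0 w1] := andP w01; have rd0 := addr_ge0 rho0 (ltW delta0).
set K := 2 `^ rho + C; have K0 : 0 <= K by rewrite addr_ge0 ?powR_ge0.
have hU : forall m, (6 <= m)%N ->
    nu m (rho + delta) rounded_union <= K * cover_cost m rho (M m) (a m) (b m) + C * w ^+ m.
  exact: nu_rounded_union_le.
clearbody K.
have h0 : (0 : R) <= 2^-1 by rewrite invr_ge0.
have h1 : (2^-1 : R) < 1 by rewrite invf_lt1 ?ltr1n.
apply: DimH_le; first exact: rd0.
apply: (@finite_series_le _ _ (fun m => K * nu m rho E + ((K + 64) * 2^-1 ^+ m + C * w ^+ m))).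
- by move=> m; apply: nu_ge0.
- move=> m m1; have q0 : (0 : R) <= 2^-1 ^+ m by rewrite exprn_ge0.
  have : 0 <= C * w ^+ m by rewrite mulr_ge0 ?exprn_ge0.
  have : 0 <= K * nu m rho E by rewrite mulr_ge0 ?nu_ge0.
  have : 0 <= K * 2^-1 ^+ m by rewrite mulr_ge0.
  have [m6|m5] := leqP 6 m.
    have := hU m m6; have := ler_wpM2l K0 (near_optimal m1).
    by rewrite !mulrDr !mulrDl; lra.
  (* the first five levels are absorbed by the geometric term, as [2^6 = 64] *)
  have : 1 <= 64 * 2^-1 ^+ m :> R.
    rewrite exprVn ler_pdivlMr ?exprn_gt0 // mul1r -[64]/((2 ^ 6)%N%:R) natrX.
    by rewrite ler_eXn2l ?ltr1n // ltnW.
  have := nu_le1 rounded_union m1 rd0.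
  by rewrite mulrDl; lra.
- apply: finite_seriesD => [m|m||].
  + by rewrite mulr_ge0 ?nu_ge0.
  + by rewrite addr_ge0 ?mulr_ge0 ?addr_ge0 ?exprn_ge0.
  + exact: finite_seriesZ K0 (fun n => nu_ge0 n rho E) finite_nu.
  apply: finite_seriesD => [m|m||]; rewrite ?mulr_ge0 ?addr_ge0 ?exprn_ge0 //.
    by apply: finite_series_geometric; rewrite ?addr_ge0 ?h0.
  by apply: finite_series_geometric; rewrite ?w0.
Qed.

End RoundedCover.

Lemma near_optimal_covers (R : realType) (E : set R) (rho : R) :
  exists M a b (Q : nat -> nat -> set R), forall n, (1 <= n)%N ->
    cover n E (M n) (a n) (b n) (Q n) /\
    cover_cost n rho (M n) (a n) (b n) <= nu n rho E + 2^-1 ^+ n.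
Proof.
have /choice[f hf] : forall n, exists y : nat * (nat -> int) * (nat -> int) * (nat -> set R),
  (1 <= n)%N -> cover n E y.1.1.1 y.1.1.2 y.1.2 y.2 /\
                cover_cost n rho y.1.1.1 y.1.1.2 y.1.2 <= nu n rho E + 2^-1 ^+ n.
  move=> n; have [n1|_] := leqP 1 n; last first.
    by exists (0%N, fun=> 0, fun=> 0, fun=> set0).
  have e0 : (0 : R) < 2^-1 ^+ n by rewrite exprn_gt0 // invr_gt0.
  have [m [a [b [Q [EQ lt]]]]] := nu_approx rho E n1 e0.
  by exists (m, a, b, Q) => _; split=> //; apply: ltW.
by exists (fun n => (f n).1.1.1), (fun n => (f n).1.1.2), (fun n => (f n).1.2),
  (fun n => (f n).2).
Qed.

Lemma exists_rounded_cover (R : realType) (E : set R) (rho delta : R) :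
  0 <= rho -> 0 < delta -> finite_series (fun n => nu n rho E) ->
  exists F : nat -> set (set R),
    (forall n : nat, (1 <= n)%N ->
       (forall Q, F n Q -> exists (a b : int) (k : nat),
            (1 <= k)%N /\ int_interval Q a b /\ b - a = (k * n ^ 2)%:Z) /\
       E `&` Sn n `<=` \bigcup_(Q in F n) Q) /\
    DimH (\bigcup_(n in [set n : nat | (1 <= n)%N]) \bigcup_(Q in F n) Q) <= rho + delta.
Proof.
move=> r0 d0 fE; have [M [a [b [Q hcov]]]] := near_optimal_covers E rho.
have [C [w [C0 [w01 hCw]]]] := sqr_div_exp2_powR_le r0 d0.
exists (rounded_family M a b); split.
  by move=> n n1; apply: (rounded_family_cover (fun n n1 => (hcov n n1).1)).
exact: (DimH_rounded_union_le (fun n n1 => (hcov n n1).1) r0 d0 C0 w01 hCw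
          (fun n n1 => (hcov n n1).2) fE).
Qed.

Unset Implicit Arguments.

Theorem lemma6 (R : realType) (E : set R) (hE : E `<=` [set x : R | 0 <= x]) :
  DimH E =
  inf [set d : R | exists F : nat -> set (set R),
         (forall n : nat, (1 <= n)%N ->
            (forall Q, F n Q -> exists (a b : int) (k : nat),
                 (1 <= k)%N /\ int_interval Q a b /\ b - a = (k * n ^ 2)%:Z) /\
            E `&` Sn n `<=` \bigcup_(Q in F n) Q) /\
         d = DimH (\bigcup_(n in [set n : nat | (1 <= n)%N]) \bigcup_(Q in F n) Q)].
Proof.
set S := [set d : R | _].
have lbS : lbound S (DimH E).
  move=> _ [F [hF ->]]; apply: le_DimH => n n1 x Ex.
  by exists n => //; apply: (hF n n1).2.
have [r [r0 fE0]] := DimH_exponents_neq0 E.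
have [F0 [hF0 _]] := exists_rounded_cover r0 ltr01 fE0.
have S0 : S !=set0 by eexists; exists F0.
apply/le_anti/andP; split; first exact: lb_le_inf S0 lbS.
apply/ler_addgt0Pr => e e0; have e20 : 0 < e / 2 by rewrite divr_gt0.
have : inf (DimH_exponents E) < DimH E + e / 2 by rewrite ltrDl.
case/(inf_lt (DimH_exponents_neq0 E)) => rho [r0' fE] rlt.
have [F [hF hd]] := exists_rounded_cover r0' e20 fE.
have : inf S <= DimH (\bigcup_(n in [set n : nat | (1 <= n)%N]) \bigcup_(Q in F n) Q).
  by apply: ge_inf; [exists (DimH E) | exists F].
lra.
Qed.
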